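(* Let $\mathbb{X}$ be a Banach space and $\delta>0$. Suppose $V\subset\mathbb{X}$ is a $\delta$-separated set with $\#V\geq2$ and there exist a line $L$ and a number $0\leq\alpha<1/8$ such that $\mathrm{dist}(x,L)\leq\alpha\delta$ for all $x\in V$. Let $\pi_L$ be any metric projection onto $L$ and let $\Pi_L$ be any $J$-projection onto $L$. Then there is an identification of $L$ with $\mathbb{R}$ (via an affine isometry) such that for all $x,y\in V$, $\pi_L(x)\leq\pi_L(y)$ if and only if $\Pi_L(x)\leq\Pi_L(y)$.
   Context: All Banach spaces are real; a line is a one-dimensional affine subspace. $V$ is $\delta$-separated if $|v-w|\geq\delta$ for distinct $v,w\in V$. A metric projection onto $L$ is any map $\pi_L:\mathbb{X}\to L$ with $|x-\pi_L(x)|=\mathrm{dist}(x,L)$. A normalized duality mapping is any (possibly nonlinear) map $J:\mathbb{X}\to\mathbb{X}^*$ with $|J(x)|_{\mathbb{X}^*}=|x|$ and $\langle J(x),x\rangle=|x|^2$ for all $x$. If $L$ is a one-dimensional linear subspace, the $J$-projection onto $L$ is $\Pi_L(x)=\langle J(v),x\rangle v$ where $v\in L$ with $|v|=1$ is fixed; for an affine line $L$ and any $q\in L$, $\Pi_L(x)=q+\Pi_{L-q}(x-q)$. *)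

From Stdlib Require Import Reals.
Open Scope R_scope.

Record NormedSpace := {
  car :> Type;
  zero : car;
  add : car -> car -> car;
  opp : car -> car;
  scal : R -> car -> car;
  norm : car -> R;
  add_assoc : forall x y z, add x (add y z) = add (add x y) z;
  add_comm : forall x y, add x y = add y x;
  add_zero : forall x, add x zero = x;
  add_opp : forall x, add x (opp x) = zero;
  scal_assoc : forall a b x, scal a (scal b x) = scal (a * b) x;
  scal_one : forall x, scal 1 x = x;
  scal_distr_l : forall a x y, scal a (add x y) = add (scal a x) (scal a y);
  scal_distr_r : forall a b x, scal (a + b) x = add (scal a x) (scal b x);
  norm_eq0 : forall x, norm x = 0 -> x = zero;
  norm_scal : forall a x, norm (scal a x) = Rabs a * norm x;
  norm_triangle : forall x y, norm (add x y) <= norm x + norm y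
}.

Arguments zero {_}.
Arguments add {_} _ _.
Arguments opp {_} _.
Arguments scal {_} _ _.
Arguments norm {_} _.

Definition sub {X : NormedSpace} (x y : X) : X := add x (opp y).

Definition banach (X : NormedSpace) : Prop :=
  forall u : nat -> X,
    (forall eps, eps > 0 -> exists N, forall m n, (m >= N)%nat -> (n >= N)%nat ->
        norm (sub (u m) (u n)) < eps) ->
    exists l : X, forall eps, eps > 0 -> exists N, forall n, (n >= N)%nat ->
        norm (sub (u n) l) < eps.

Definition separated {X : NormedSpace} (V : X -> Prop) (delta : R) : Prop :=
  forall v w, V v -> V w -> v <> w -> norm (sub v w) >= delta.

Definition is_line {X : NormedSpace} (L : X -> Prop) : Prop :=
  exists (q u : X), u <> zero /\ forall x, L x <-> exists t : R, x = add q (scal t u).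

Definition is_inf (S : R -> Prop) (d : R) : Prop :=
  (forall s, S s -> d <= s) /\ (forall b, (forall s, S s -> b <= s) -> b <= d).

Definition is_dist {X : NormedSpace} (x : X) (L : X -> Prop) (d : R) : Prop :=
  is_inf (fun r => exists y, L y /\ r = norm (sub x y)) d.

Definition metric_projection {X : NormedSpace} (L : X -> Prop) (p : X -> X) : Prop :=
  forall x, L (p x) /\ is_dist x L (norm (sub x (p x))).

Definition linear_functional {X : NormedSpace} (f : X -> R) : Prop :=
  (forall x y, f (add x y) = f x + f y) /\ (forall a x, f (scal a x) = a * f x).

Definition dual_norm {X : NormedSpace} (f : X -> R) (c : R) : Prop :=
  is_lub (fun r => exists y : X, norm y <= 1 /\ r = Rabs (f y)) c.

Definition duality_map {X : NormedSpace} (J : X -> X -> R) : Prop :=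
  forall x, linear_functional (J x) /\ dual_norm (J x) (norm x)
            /\ J x x = norm x * norm x.

(* J-projection onto the affine line L, built from the base point q in L and a
   unit vector v of the direction space L - q:  Pi(x) = q + <J v, x - q> v *)
Definition J_projection {X : NormedSpace} (J : X -> X -> R) (q v : X) : X -> X :=
  fun x => add q (scal (J v (sub x q)) v).

Definition J_projection_data {X : NormedSpace} (L : X -> Prop) (q v : X) : Prop :=
  L q /\ norm v = 1 /\ forall t : R, L (add q (scal t v)).

Definition affine_isometry_onto_R {X : NormedSpace} (L : X -> Prop) (phi : X -> R) : Prop :=
  (forall a b, L a -> L b -> Rabs (phi a - phi b) = norm (sub a b)) /\
  (forall a b t, L a -> L b ->
       phi (add a (scal t (sub b a))) = phi a + t * (phi b - phi a)) /\
  (forall r : R, exists z, L z /\ phi z = r).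

(* Fix the functional f = J v, so that f v = 1 and f has norm 1, and use the
   coordinate phi x = f (x - q).  On L, phi is an isometry; phi is unchanged
   by the J-projection, and moves each point of V by at most alpha delta when
   passing to its metric projection, since |f z| <= |z|.  Metric projections of
   distinct points of V are at distance at least (1 - 2 alpha) delta > 2 alpha delta
   apart, so these perturbations cannot swap their order. *)
From Stdlib Require Import Reals Lra Psatz Classical.
Open Scope R_scope.

Arguments add_assoc {_} _ _ _.
Arguments add_comm {_} _ _.
Arguments add_zero {_} _.
Arguments add_opp {_} _.
Arguments scal_assoc {_} _ _ _.
Arguments scal_one {_} _.
Arguments scal_distr_l {_} _ _ _.
Arguments scal_distr_r {_} _ _ _.
Arguments norm_eq0 {_} _ _.
Arguments norm_scal {_} _ _.
Arguments norm_triangle {_} _ _.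

Lemma order_stable_under_perturbation (p1 p2 r1 r2 e : R) :
  Rabs (p1 - r1) <= e -> Rabs (p2 - r2) <= e -> 2 * e < Rabs (p1 - p2) ->
  (p1 <= p2 <-> r1 <= r2).
Proof. unfold Rabs; repeat destruct Rcase_abs; intros; split; intros; lra. Qed.

Section NormedSpaceFacts.
Variable X : NormedSpace.

Lemma zero_add (a : X) : add zero a = a.
Proof. rewrite add_comm. apply add_zero. Qed.

Lemma sub_split (a b c : X) : sub a c = add (sub a b) (sub b c).
Proof.
  unfold sub. rewrite <- add_assoc. f_equal.
  rewrite add_assoc, (add_comm (opp b) b), add_opp, zero_add. reflexivity.
Qed.

Lemma add_sub_l (a w : X) : sub (add a w) a = w.
Proof.
  unfold sub. rewrite <- add_assoc, (add_comm w), add_assoc, add_opp. apply zero_add.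
Qed.

Lemma scal0 (x : X) : scal 0 x = zero.
Proof.
  assert (Hdouble : scal 0 x = add (scal 0 x) (scal 0 x)).
  { rewrite <- scal_distr_r. f_equal. ring. }
  rewrite <- (add_opp (scal 0 x)).
  rewrite Hdouble at 2. rewrite <- add_assoc, add_opp, add_zero. reflexivity.
Qed.

Lemma opp_scal (x : X) : opp x = scal (-1) x.
Proof.
  assert (Hcancel : add x (scal (-1) x) = zero).
  { rewrite <- (scal_one x) at 1. rewrite <- scal_distr_r.
    replace (1 + -1) with 0 by ring. apply scal0. }
  rewrite <- (add_zero (opp x)), <- Hcancel, add_assoc, (add_comm (opp x)), add_opp.
  apply zero_add.
Qed.

Lemma norm_opp (x : X) : norm (opp x) = norm x.
Proof. rewrite opp_scal, norm_scal, Rabs_left by lra. ring. Qed.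

Lemma norm_nonneg (x : X) : 0 <= norm x.
Proof.
  pose proof (norm_triangle x (opp x)) as Htri.
  rewrite add_opp, <- (scal0 x), norm_scal, Rabs_R0, norm_opp in Htri. lra.
Qed.

Lemma sub_opp (a b : X) : sub a b = opp (sub b a).
Proof.
  unfold sub. rewrite !opp_scal, scal_distr_l, scal_assoc.
  replace (-1 * -1) with 1 by ring. rewrite scal_one. apply add_comm.
Qed.

Lemma norm_sub_sym (a b : X) : norm (sub a b) = norm (sub b a).
Proof. rewrite sub_opp. apply norm_opp. Qed.

Lemma norm_sub_triangle3 (x x' y' y : X) :
  norm (sub x y) <= norm (sub x x') + norm (sub x' y') + norm (sub y' y).
Proof.
  rewrite (sub_split x x' y), (sub_split x' y' y).
  pose proof (norm_triangle (sub x x') (add (sub x' y') (sub y' y))).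
  pose proof (norm_triangle (sub x' y') (sub y' y)). lra.
Qed.

Lemma norm_sub_nearby_lower_bound (x y x' y' : X) (d e : R) :
  d <= norm (sub x y) -> norm (sub x x') <= e -> norm (sub y y') <= e ->
  d - 2 * e <= norm (sub x' y').
Proof.
  intros Hxy Hx Hy.
  pose proof (norm_sub_triangle3 x x' y' y). rewrite (norm_sub_sym y' y) in *. lra.
Qed.

Lemma sub_line_points (q0 u : X) (s r : R) :
  sub (add q0 (scal s u)) (add q0 (scal r u)) = scal (s - r) u.
Proof.
  rewrite (sub_split _ q0), (sub_opp q0), !add_sub_l, opp_scal, scal_assoc.
  rewrite <- scal_distr_r. f_equal. ring.
Qed.

Lemma line_sub_multiple (L : X -> Prop) (q0 u : X) :
  (forall x, L x <-> exists t, x = add q0 (scal t u)) ->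
  forall a b, L a -> L b -> exists s, sub a b = scal s u.
Proof.
  intros HLu a b La Lb.
  destruct (proj1 (HLu a) La) as [s ->]. destruct (proj1 (HLu b) Lb) as [r ->].
  exists (s - r). apply sub_line_points.
Qed.

Section LinearFunctional.
Variable f : X -> R.
Hypothesis Hf : linear_functional f.

Lemma linear_zero : f zero = 0.
Proof. destruct Hf as [Hadd _]. pose proof (Hadd zero zero). rewrite add_zero in *. lra. Qed.

Lemma linear_sub (a b : X) : f (sub a b) = f a - f b.
Proof. destruct Hf as [Hadd Hscal]. unfold sub. rewrite Hadd, opp_scal, Hscal. ring. Qed.

Lemma dual_norm1_bound : dual_norm f 1 -> forall z, Rabs (f z) <= norm z.
Proof.
  intros [Hub _] z. destruct Hf as [_ Hscal].
  destruct (Req_dec (norm z) 0) as [Hz0 | Hz0].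
  - rewrite (norm_eq0 z Hz0), linear_zero, Rabs_R0. apply norm_nonneg.
  - assert (Hpos : 0 < / norm z) by (pose proof (norm_nonneg z); apply Rinv_0_lt_compat; lra).
    assert (Hunit : Rabs (f (scal (/ norm z) z)) <= 1).
    { apply Hub. exists (scal (/ norm z) z). split; [|reflexivity].
      rewrite norm_scal, Rabs_right by lra. right. field. exact Hz0. }
    rewrite Hscal, Rabs_mult, Rabs_right in Hunit by lra.
    apply (Rmult_le_reg_l (/ norm z)); [lra|]. rewrite Rinv_l by exact Hz0. lra.
Qed.

Lemma norming_functional_isometry_on_line (L : X -> Prop) (q v : X) :
  is_line L -> L q -> L (add q v) -> norm v = 1 -> f v = 1 ->
  forall a b, L a -> L b -> Rabs (f (sub a b)) = norm (sub a b).
Proof.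
  intros [q0 [u [_ HLu]]] Lq Lqv Nv Fv a b La Lb.
  destruct Hf as [_ Hscal].
  destruct (line_sub_multiple L q0 u HLu _ _ Lqv Lq) as [c Hv].
  rewrite add_sub_l in Hv.
  destruct (line_sub_multiple L q0 u HLu _ _ La Lb) as [s ->].
  assert (Hc : Rabs c * Rabs (f u) = Rabs c * norm u).
  { rewrite <- Rabs_mult, <- Hscal, <- norm_scal, <- Hv, Fv, Nv. apply Rabs_R1. }
  assert (Hc0 : Rabs c <> 0).
  { intro Hc0. rewrite Hv, norm_scal, Hc0 in Nv. lra. }
  rewrite Hscal, norm_scal, Rabs_mult. f_equal.
  apply (Rmult_eq_reg_l (Rabs c)); assumption.
Qed.

Definition line_coord (q x : X) : R := f (sub x q).

Lemma line_coord_sub (q a b : X) : line_coord q a - line_coord q b = f (sub a b).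
Proof. unfold line_coord. rewrite !linear_sub. ring. Qed.

Lemma line_coord_affine_isometry (L : X -> Prop) (q v : X) :
  is_line L -> L q -> (forall t, L (add q (scal t v))) -> norm v = 1 -> f v = 1 ->
  affine_isometry_onto_R L (line_coord q).
Proof.
  intros HL Lq Lline Nv Fv. destruct Hf as [Hadd Hscal].
  split; [|split].
  - intros a b La Lb. rewrite line_coord_sub.
    apply (norming_functional_isometry_on_line L q v); auto.
    rewrite <- (scal_one v). apply Lline.
  - intros a b t _ _. unfold line_coord. rewrite !linear_sub, Hadd, Hscal, linear_sub. ring.
  - intros r. exists (add q (scal r v)). split; [apply Lline|].
    unfold line_coord. rewrite add_sub_l, Hscal, Fv. ring.
Qed.

End LinearFunctional.
End NormedSpaceFacts.

Lemma line_coord_J_projection (X : NormedSpace) (J : X -> X -> R) (q v x : X) :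
  linear_functional (J v) -> J v v = 1 ->
  line_coord X (J v) q (J_projection J q v x) = line_coord X (J v) q x.
Proof.
  intros [_ Hscal] Jvv. unfold line_coord, J_projection.
  rewrite add_sub_l, Hscal, Jvv. ring.
Qed.

Theorem mainTheorem12
  (X : NormedSpace) (HX : banach X) (delta : R) (Hdelta : delta > 0)
  (V : X -> Prop) (HV : separated V delta)
  (HV2 : exists v w, V v /\ V w /\ v <> w)
  (L : X -> Prop) (HL : is_line L) (alpha : R)
  (Halpha : 0 <= alpha < 1/8)
  (Hclose : forall x d, V x -> is_dist x L d -> d <= alpha * delta)
  (piL : X -> X) (HpiL : metric_projection L piL)
  (J : X -> X -> R) (HJ : duality_map J) (q v : X) (Hqv : J_projection_data L q v) :
  exists phi : X -> R, affine_isometry_onto_R L phi /\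
    forall x y, V x -> V y ->
      (phi (piL x) <= phi (piL y) <->
       phi (J_projection J q v x) <= phi (J_projection J q v y)).
Proof.
  destruct Hqv as [Lq [Nv Lline]].
  destruct (HJ v) as [Hlin [Hdual Jvv]]. rewrite Nv in Hdual, Jvv. rewrite Rmult_1_l in Jvv.
  set (phi := line_coord X (J v) q).
  assert (Hiso : affine_isometry_onto_R L phi)
    by (apply (line_coord_affine_isometry X (J v) Hlin L q v); auto).
  exists phi. split; [exact Hiso|].
  assert (Hproj : forall z, V z -> norm (sub z (piL z)) <= alpha * delta)
    by (intros z Vz; apply (Hclose z); [exact Vz | apply HpiL]).
  assert (Hmove : forall z, V z -> Rabs (phi (piL z) - phi z) <= alpha * delta).
  { intros z Vz. unfold phi. rewrite line_coord_sub by exact Hlin.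
    eapply Rle_trans; [apply dual_norm1_bound; assumption|].
    rewrite norm_sub_sym. apply Hproj, Vz. }
  intros x y Vx Vy. unfold phi. rewrite !line_coord_J_projection by assumption. fold phi.
  destruct (classic (x = y)) as [<- | Hxy]; [split; intros; lra|].
  apply (order_stable_under_perturbation _ _ _ _ (alpha * delta)); auto.
  rewrite (proj1 Hiso) by apply HpiL.
  pose proof (norm_sub_nearby_lower_bound X x y (piL x) (piL y) delta (alpha * delta)
                (Rge_le _ _ (HV x y Vx Vy Hxy)) (Hproj x Vx) (Hproj y Vy)).
  nra.
Qed.
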